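(* Let $G=(S,T,\pi)$ be a countable two-person win-lose game such that every set in $\mathcal{B}^2(G)$ is finite, and assume $G$ is LNG-free. Then the infima below are attained and $$\sup_{\mathbf{p}\in\Delta(S)}\min_{\mathbf{q}\in\Delta(T)}\pi^{\mathrm{mix}}(\mathbf{p},\mathbf{q})=1=\min_{\mathbf{q}\in\Delta(T)}\sup_{\mathbf{p}\in\Delta(S)}\pi^{\mathrm{mix}}(\mathbf{p},\mathbf{q}).$$
   Context: A two-person win-lose game is $G=(S,T,\pi)$ with non-empty $S,T$ and $\pi:S\times T\to\{0,1\}$; countable means $|S|=|T|=\aleph_0$. $\Delta(X)$ is the set of probability distributions on $X$ with at most countable support; $\pi^{\mathrm{mix}}(\mathbf{p},\mathbf{q})=\sum p_sq_t\pi(s,t)$. For $t\in T$, $B_t=\{s\in S:\pi(s,t)=0\}$ and $\mathcal{B}^2(G)=\{B_t:t\in T\}$. $G$ is LNG-free if there are no sequences of distinct $s_1,s_2,\ldots\in S$ and distinct $t_1,t_2,\ldots\in T$ with $\pi(s_i,t_j)=1\iff i\ge j$. *)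

From HB Require Import structures.
From mathcomp Require Import all_boot all_order all_algebra.
From mathcomp Require Import all_classical all_reals.
From mathcomp Require Import cardinality ereal esum.
Set Implicit Arguments. Unset Strict Implicit. Unset Printing Implicit Defensive.
Import Order.TTheory GRing.Theory Num.Theory.
Local Open Scope classical_set_scope.
Local Open Scope ring_scope.

Definition countably_infinite (X : choiceType) : Prop :=
  card_eq [set: X] [set: nat].

Definition Delta (R : realType) (X : choiceType) : set (X -> R) :=
  [set p | (forall x, 0 <= p x) /\ (\esum_(x in [set: X]) (p x)%:E = 1%E)].

(* Mixed payoff, as an extended real (it always lies in [0,1]). *)
Definition pimix (R : realType) (S T : choiceType) (pi : S -> T -> bool)
  (p : S -> R) (q : T -> R) : \bar R :=
  \esum_(st in [set: S * T]) (p st.1 * q st.2 * (pi st.1 st.2)%:R)%:E.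

Definition Bset (S T : Type) (pi : S -> T -> bool) (t : T) : set S :=
  [set s | pi s t = false].

Definition LNG_free (S T : Type) (pi : S -> T -> bool) : Prop :=
  ~ exists (s : nat -> S) (t : nat -> T),
      injective s /\ injective t /\
      forall i j, pi (s i) (t j) = (j <= i)%N.

Arguments Delta : clear implicits.

From HB Require Import structures.
From mathcomp Require Import all_boot all_order all_algebra.
From mathcomp Require Import all_classical all_reals.
From mathcomp Require Import cardinality ereal esum.
From mathcomp Require Import lra.
Import Order.TTheory GRing.Theory Num.Theory.
Local Open Scope classical_set_scope.
Local Open Scope ring_scope.

(* Enumerate S by nat; against a pure column t, a mixed row p then scores
   1 - p(B_t). Since every B_t is finite, for any q some pure row lies beyond
   the sets B_t of a q-heavy finite set of columns, so sup_p pi(p, q) = 1.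
   LNG-freeness says exactly that adding one point to a finite subset of some
   B_t, while staying inside some B_t, is well founded: an infinite increasing
   chain would produce the forbidden ladder. Well-founded induction on finite
   families of such sets gives, for every eps, a finitely supported p with
   p(B_t) <= eps for all t: average N ~ 2/eps distributions, the j-th being
   eps/2-small on every one-point extension by a point charged by an earlier
   one, so that each t is eps/2-large for at most one of them. The same
   well-foundedness shows that sup_t p(B_t) is attained, i.e. min_q exists. *)

Section MixedPayoff.
Context {R : realType}.
Local Open Scope ereal_scope.

Lemma esumZl (X : choiceType) (I : set X) (a : X -> \bar R) (c : R) :
  (0 <= c)%R -> (forall i, I i -> 0 <= a i) ->
  \esum_(i in I) (c%:E * a i) = c%:E * \esum_(i in I) a i.
Proof.
move=> c0 a0; rewrite /esum -ereal_supZl //; last first.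
  by apply/set0P; exists 0, set0; [exact: fsets_set0|rewrite fsbig_set0].
have sumZ A : finite_set A -> A `<=` I ->
    \sum_(x \in A) (c%:E * a x) = c%:E * \sum_(x \in A) a x.
  move=> fA AI; rewrite !fsbig_finite // big_seq [X in _ = _ * X]big_seq.
  rewrite ge0_sume_distrr // => x; rewrite in_fset_set // inE => /AI; exact: a0.
apply: congr1; apply/seteqP; split => x.
  by move=> [A [fA AI] <-]; exists (\sum_(x \in A) a x); [exists A|rewrite sumZ].
by move=> [y [A [fA AI] <-] <-]; exists A => //; rewrite sumZ.
Qed.

Definition pure {X : choiceType} (x0 : X) : X -> R := fun x => (x == x0)%:R.

Lemma pure_ge0 (X : choiceType) (x0 x : X) : (0 <= pure x0 x)%R.
Proof. by rewrite /pure; case: (_ == _). Qed.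

Lemma esum_pure (X : choiceType) (x0 : X) (g : X -> \bar R) :
  (forall x, 0 <= g x) -> \esum_(x in [set: X]) ((pure x0 x)%:E * g x) = g x0.
Proof.
move=> g0; rewrite (esumID [set x0]); last first.
  by move=> x _; rewrite mule_ge0 ?lee_fin ?pure_ge0.
rewrite setTI esum_set1 /pure ?eqxx ?mul1e // esum1 ?adde0 // => x [_ /eqP/negbTE ->].
by rewrite mul0e.
Qed.

Lemma Delta_pure (X : choiceType) (x0 : X) : Delta R X (pure x0).
Proof.
split=> [x|]; first exact: pure_ge0.
under eq_esum do rewrite -[_%:E]mule1.
by rewrite esum_pure.
Qed.

Lemma Delta_comp {X Y : choiceType} {e : Y -> X} {p : X -> R} :
  bijective e -> Delta R X p -> Delta R Y (p \o e).
Proof.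
move=> eb [p0 p1]; split=> [y|]; first exact: p0.
by rewrite -p1 (reindex_esum [set: Y] _ e) // setTT_bijective.
Qed.

Context {S T : choiceType} (pi : S -> T -> bool).

Definition winprob (p : S -> R) (t : T) : \bar R :=
  \esum_(s in [set: S]) (p s * (pi s t)%:R)%:E.

Lemma winprob_ge0 p t : (forall s, 0 <= p s)%R -> 0 <= winprob p t.
Proof. by move=> p0; apply: esum_ge0 => s _; rewrite lee_fin mulr_ge0. Qed.

Lemma winprob_le1 p t : Delta R S p -> winprob p t <= 1.
Proof.
move=> [p0 <-]; apply: le_esum => s _; rewrite lee_fin.
by case: (pi s t); rewrite ?mulr1 ?mulr0.
Qed.

Lemma winprob_pure s0 t : winprob (pure s0) t = ((pi s0 t)%:R)%:E.
Proof.
rewrite /winprob; under eq_esum do rewrite EFinM.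
by rewrite esum_pure // => s; rewrite lee_fin; case: (pi s t).
Qed.

Lemma pimixE p q : (forall s, 0 <= p s)%R -> (forall t, 0 <= q t)%R ->
  pimix pi p q = \esum_(t in [set: T]) ((q t)%:E * winprob p t).
Proof.
move=> p0 q0; transitivity
    (\esum_(t in [set: T]) \esum_(s in [set: S]) (p s * q t * (pi s t)%:R)%:E).
  rewrite esum_esum; last by move=> t s _ _; rewrite lee_fin !mulr_ge0.
  rewrite (_ : _ `*`` _ = [set: T * S]); last by apply/seteqP; split=> -[].
  rewrite /pimix (reindex_esum [set: T * S] [set: S * T] (fun k => (k.2, k.1))) //.
  by rewrite setTT_bijective; exists (fun k => (k.2, k.1)); case.
apply: eq_esum => t _; rewrite /winprob -esumZl //; last first.
  by move=> s _; rewrite lee_fin mulr_ge0.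
by apply: eq_esum => s _; rewrite -EFinM mulrCA mulrA.
Qed.

Lemma pimix_le1 p q : Delta R S p -> Delta R T q -> pimix pi p q <= 1.
Proof.
move=> Dp [q0 q1]; rewrite pimixE //; last by case: Dp.
rewrite -q1; apply: le_esum => t _; rewrite -[X in _ <= X]mule1.
by rewrite lee_wpmul2l ?lee_fin ?winprob_le1.
Qed.

Lemma pimix_ge_winprob p q (c : R) : (0 <= c)%R -> (forall s, 0 <= p s)%R ->
  Delta R T q -> (forall t, c%:E <= winprob p t) -> c%:E <= pimix pi p q.
Proof.
move=> c0 p0 [q0 q1] cW; rewrite pimixE // -[c%:E]mule1 -q1 -esumZl //; last first.
  by move=> t _; rewrite lee_fin.
by apply: le_esum => t _; rewrite muleC lee_wpmul2l ?lee_fin.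
Qed.

Lemma pimix_pure_r p t0 : (forall s, 0 <= p s)%R ->
  pimix pi p (pure t0) = winprob p t0.
Proof.
by move=> p0; rewrite pimixE // esum_pure // => t; apply: winprob_ge0.
Qed.

End MixedPayoff.

Lemma pimix_comp {R : realType} {S S' T : choiceType} (pi : S -> T -> bool)
    (e : S' -> S) (p : S -> R) (q : T -> R) :
  bijective e -> pimix pi p q = pimix (fun s' => pi (e s')) (p \o e) q.
Proof.
move=> [g eg ge]; rewrite /pimix (reindex_esum [set: S' * T] [set: S * T]
  (fun k => (e k.1, k.2))) // setTT_bijective.
by exists (fun k => (g k.1, k.2)) => -[x y] /=; rewrite ?eg ?ge.
Qed.

Lemma finite_Bset_comp {S S' T : Type} (pi : S -> T -> bool) (e : S' -> S) t :
  injective e -> finite_set (Bset pi t) -> finite_set (Bset (fun s' => pi (e s')) t).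
Proof. by move=> ei; apply: finite_preimage => x y _ _ /ei. Qed.

Lemma LNG_free_comp {S S' T : Type} (pi : S -> T -> bool) (e : S' -> S) :
  injective e -> LNG_free pi -> LNG_free (fun s' => pi (e s')).
Proof.
move=> ei LNG [s [t [si [ti st]]]]; apply: LNG; exists (e \o s), t.
by split=> // i j /ei/si.
Qed.

Lemma image_Delta_pimix {R : realType} {S S' T : choiceType} (pi : S -> T -> bool)
    {e : S' -> S} {Y : Type} (G : ((T -> R) -> \bar R) -> Y) :
  bijective e ->
  [set G (pimix pi p) | p in Delta R S] =
  [set G (pimix (fun s' => pi (e s')) p') | p' in Delta R S'].
Proof.
move=> eb; have [g eg ge] := eb; have gb : bijective g by exists e.
apply/seteqP; split=> _ [p Dp <-].
  exists (p \o e); first exact: Delta_comp.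
  by congr G; apply/funext => q; rewrite -pimix_comp.
exists (p \o g); first exact: Delta_comp.
congr G; apply/funext => q; rewrite (pimix_comp pi e _ _ eb).
by congr pimix; apply/funext => x /=; rewrite eg.
Qed.

Definition nat_bound (A : set nat) : nat :=
  (\max_(i <- finmap.enum_fset (fset_set A)) i).+1.

Lemma nat_boundP (A : set nat) : finite_set A -> A `<=` `I_(nat_bound A).
Proof.
by move=> fA i Ai; rewrite /= ltnS leq_bigmax_seq // in_fset_set // inE.
Qed.

Section NatSeries.
Context {R : realType}.
Local Open Scope ereal_scope.

Lemma esum_nat_trunc (f : nat -> R) n : (forall i, 0 <= f i)%R ->
  (forall i, (n <= i)%N -> f i = 0%R) ->
  \esum_(i in [set: nat]) (f i)%:E = (\sum_(i < n) f i)%:E.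
Proof.
move=> f0 fn; rewrite (esumID `I_n); last by move=> i _; rewrite lee_fin.
rewrite setTI esum_fset //; last by move=> i _; rewrite lee_fin.
rewrite -fsbig_ord sumEFin esum1 ?adde0 // => i [_ /negP].
by rewrite -leqNgt => /fn ->.
Qed.

Lemma esum_nat_ge_partial (f : nat -> R) K : (forall i, 0 <= f i)%R ->
  (\sum_(i < K) f i)%:E <= \esum_(i in [set: nat]) (f i)%:E.
Proof.
move=> f0; rewrite (esumID `I_K); last by move=> i _; rewrite lee_fin.
rewrite setTI esum_fset //; last by move=> i _; rewrite lee_fin.
by rewrite -fsbig_ord sumEFin leeDl // esum_ge0 // => i _; rewrite lee_fin.
Qed.

Lemma Delta_nat_partial_le1 p K : Delta R nat p -> (\sum_(i < K) p i <= 1)%R.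
Proof. by move=> [p0 p1]; rewrite -lee_fin -p1 esum_nat_ge_partial. Qed.

Lemma Delta_nat_partial_ge p (d : R) : Delta R nat p -> (0 < d)%R ->
  exists K, (1 - d <= \sum_(i < K) p i)%R.
Proof.
move=> [p0 p1] d0; have : (1 - d)%:E < \esum_(i in [set: nat]) (p i)%:E.
  by rewrite p1 lte_fin gtrBl.
move=> /ereal_sup_gt[_ [A [fA _] <-]] dA; exists (nat_bound A).
rewrite -lee_fin (_ : (\sum_(i < _) p i)%:E = \esum_(i in `I_(nat_bound A)) (p i)%:E).
  by apply: esum_ge; exists A; [split=> //; apply: nat_boundP|apply: ltW].
rewrite esum_fset //; last by move=> i _; rewrite lee_fin.
by rewrite -fsbig_ord sumEFin.
Qed.

End NatSeries.

Lemma sum_le_one_large {R : realDomainType} (mu : nat -> R) (e : R) N :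
  0 <= e -> (forall i, mu i <= 1) ->
  (forall i j, (i < j)%N -> e < mu i -> mu j <= e) ->
  \sum_(i < N) mu i <= 1 + N%:R * e.
Proof.
move=> e0 mu1 once; have sumE : \sum_(i < N) e = N%:R * e.
  by rewrite sumr_const card_ord mulr_natl.
have [[i0 i0N bad]|nobad] := pselect (exists2 i0, (i0 < N)%N & e < mu i0).
  have other i : i != i0 -> mu i <= e.
    move=> ni; rewrite leNgt; apply/negP => badi.
    have [ii0|i0i|ii0] := ltngtP i i0.
    - by have := once _ _ ii0 badi; rewrite leNgt bad.
    - by have := once _ _ i0i bad; rewrite leNgt badi.
    - by rewrite ii0 eqxx in ni.
  rewrite -sumE (bigD1 (Ordinal i0N)) //= [\sum_(i < N) e](bigD1 (Ordinal i0N)) //=.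
  rewrite addrA lerD ?ler_wpDr // ler_sum // => i ni; apply: other.
  by apply: contraNneq ni => ii0; apply/eqP/val_inj.
rewrite -sumE (le_trans _ (ler_wpDl ler01 (lexx _))) // ler_sum // => i _.
by rewrite leNgt; apply/negP => bad; apply: nobad; exists i.
Qed.

Lemma finite_pos_lower_bound {R : realDomainType} (P : nat -> R -> Prop) K :
  (forall x d d', P x d -> d' <= d -> P x d') ->
  (forall x, (x < K)%N -> exists2 d, 0 < d & P x d) ->
  exists2 d, 0 < d & forall x, (x < K)%N -> P x d.
Proof.
move=> Pmono; elim: K => [|K IH] Pex; first by exists 1.
have [d dpos dK] := IH (fun x xK => Pex x (leqW xK)).
have [d' d'pos d'K] := Pex K (ltnSn K).
exists (Num.min d d'); first by rewrite lt_min dpos.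
move=> x; rewrite ltnS leq_eqVlt => /predU1P[->|/dK Pd].
  by apply: (Pmono _ _ _ d'K); rewrite ge_min lexx orbT.
by apply: (Pmono _ _ _ Pd); rewrite ge_min lexx.
Qed.

Lemma exists_inv_nat_le {R : archiRealFieldType} (e : R) :
  0 < e -> exists2 N : nat, (0 < N)%N & N%:R^-1 <= e.
Proof.
move=> e0; exists (Num.truncn e^-1).+1 => //.
rewrite -[X in _ <= X]invrK lef_pV2 ?posrE ?invr_gt0 ?ltr0n //.
exact/ltW/truncnS_gt.
Qed.

Lemma ler_sum_pred {R : numDomainType} (P Q : pred nat) (f : nat -> R) n :
  (forall i, 0 <= f i) -> (forall i, (i < n)%N -> P i -> Q i) ->
  \sum_(i < n | P i) f i <= \sum_(i < n | Q i) f i.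
Proof.
move=> f0 PQ; rewrite big_mkcond [X in _ <= X]big_mkcond ler_sum // => i _.
by case: ifP => [/(PQ _ (ltn_ord i))->//|_]; case: ifP.
Qed.

Lemma injective_nat_unbounded (y : nat -> nat) m B :
  injective y -> exists k, (m < k)%N /\ (B <= y k)%N.
Proof.
move=> yi; apply: contrapT => small.
have lt_B k : (m < k)%N -> (y k < B)%N.
  by move=> mk; rewrite ltnNge; apply/negP => Bk; apply: small; exists k.
have : (size (map y (iota m.+1 B.+1)) <= size (iota 0 B))%N.
  apply: uniq_leq_size; first by rewrite map_inj_uniq ?iota_uniq.
  by move=> x /mapP[k]; rewrite !mem_iota => /andP[mk _] ->; rewrite lt_B.
by rewrite size_map !size_iota ltnn.
Qed.

Section NatGame.
Context {T : choiceType} { pi : nat -> T -> bool }.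
Hypothesis Bfin : forall t, finite_set (Bset pi t).

Definition bnd (t : T) : nat := nat_bound (Bset pi t).

Lemma pi_ge_bnd t i : (bnd t <= i)%N -> pi i t.
Proof.
move=> bi; apply/negPn/negP => /negbTE Bi.
by have := nat_boundP _ (Bfin t) _ Bi; rewrite /= ltnNge bi.
Qed.

Definition covers (F : seq nat) (t : T) : bool := all (fun i => ~~ pi i t) F.

Definition realizable (F : seq nat) : Prop := exists t, covers F t.

Definition extends (G F : seq nat) : Prop :=
  realizable G /\ exists2 x, x \notin F & G = x :: F.

Definition extends_family (L' L : seq (seq nat)) : Prop :=
  (exists F, F \in L) /\ forall G, G \in L' -> exists2 F, F \in L & extends G F.

Lemma Acc_extends_family_eq_mem L1 L2 :
  L1 =i L2 -> Acc extends_family L1 -> Acc extends_family L2.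
Proof.
move=> eL [AL1]; constructor => L [[F FL2] ext]; apply: AL1.
by split=> [|G /ext[F' F'L2]]; [exists F|exists F']; rewrite ?eL.
Qed.

Lemma Acc_extends_family_nil : Acc extends_family [::].
Proof. by constructor => L [[F]]. Qed.

Lemma Acc_extends_family_cons F L :
  Acc extends F -> Acc extends_family L -> Acc extends_family (F :: L).
Proof.
move=> AF; elim: AF L => {}F _ IHF L [AL]; constructor => L' [_ ext].
(* The members of L' extending F are absorbed one at a time by the induction
   on F; the others form a family below L. *)
pose a G := `[< extends G F >].
pose A := [seq G <- L' | a G]; pose B := [seq G <- L' | predC a G].
have extB G : G \in B -> exists2 F', F' \in L & extends G F'.
  rewrite mem_filter => /andP[/asboolPn nGF /ext[F']].
  by rewrite inE => /predU1P[->|]; [|exists F'].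
have AccB : Acc extends_family B.
  have [[G /[dup] GB /extB[F' F'L _]]|noB] := pselect (exists G, G \in B).
    by apply: AL; split; [exists F'|].
  apply: Acc_extends_family_eq_mem Acc_extends_family_nil => G.
  by rewrite in_nil; apply/esym/negbTE/negP => GB; apply: noB; exists G.
apply: (@Acc_extends_family_eq_mem (A ++ B)).
  by apply: perm_mem; apply/permPl; exact: perm_filterC.
suff AccA : forall A', {subset A' <= A} -> Acc extends_family (A' ++ B) by exact: AccA.
elim=> [|G A' IH] sA; first exact: AccB.
rewrite cat_cons; apply: IHF.
  by have /sA : G \in G :: A' := mem_head G A'; rewrite mem_filter => /andP[/asboolP].
by apply: IH => G' G'A; apply: sA; rewrite inE G'A orbT.
Qed.

Hypothesis LNG : LNG_free pi.

Lemma no_covered_injective_seq (y : nat -> nat) (tt : nat -> T) :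
  injective y -> ~ (forall n k, (k <= n)%N -> ~~ pi (y k) (tt n)).
Proof.
move=> yi cov; pose M m := \max_(j <- iota 0 m.+1) bnd (tt j).
(* Choose k (i + 1) > k i with y (k (i + 1)) beyond every B_(tt j), j <= k i;
   then s i := y (k (i + 1)) and t j := tt (k j) form the forbidden ladder. *)
have [next Hnext] := choice (fun m => injective_nat_unbounded y m (M m) yi).
pose k n := iter n next 0.
have k_lt : {homo k : i j / (i < j)%N}.
  by apply: homo_ltn => [? ? ?|n]; [apply: ltn_trans|case: (Hnext (k n))].
have k_le i j : (i <= j)%N -> (k i <= k j)%N.
  by rewrite leq_eqVlt => /predU1P[->//|/k_lt/ltnW].
have k_inj : injective k.
  move=> i j kij; apply/eqP; rewrite eqn_leq.
  by apply/andP; split; rewrite leqNgt; apply/negP => /k_lt; rewrite kij ltnn.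
pose s i := y (k i.+1); pose t j := tt (k j).
have st i j : pi (s i) (t j) = (j <= i)%N.
  case: leqP => [ji|ij]; last exact/negbTE/cov/k_le.
  apply: pi_ge_bnd; apply: leq_trans (Hnext (k i)).2.
  apply: (@leq_bigmax_seq _ _ xpredT (fun j => bnd (tt j))) => //.
  by rewrite mem_iota add0n ltnS k_le.
apply: LNG; exists s, t; split; [|split; [|exact: st]].
  by move=> i j /yi/k_inj[].
move=> i j tij; apply/eqP; rewrite eqn_leq -(st j i) -(st i j) tij.
by rewrite st leqnn -tij st leqnn.
Qed.

Lemma wf_extends : well_founded extends.
Proof.
move=> F0; apply: contrapT => nAcc.
have step F : exists G, ~ Acc extends F -> extends G F /\ ~ Acc extends G.
  have [AF|nAF] := pselect (Acc extends F); first by exists F.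
  apply: contrapT => noG; apply: nAF; constructor => G GF.
  by apply: contrapT => nAG; apply: noG; exists G.
have [nxt Hnxt] := choice step.
pose ch n := iter n nxt F0.
have chA n : ~ Acc extends (ch n) by elim: n => //= n IH; case: (Hnxt _ IH).
have chE n : extends (ch n.+1) (ch n) by case: (Hnxt _ (chA n)).
pose y n := head 0 (ch n.+1).
have yE n : ch n.+1 = y n :: ch n /\ y n \notin ch n.
  by have [_ [x xn chS]] := chE n; rewrite /y chS.
have y_in k n : (k < n)%N -> y k \in ch n.
  elim: n => // n IH; rewrite ltnS leq_eqVlt (yE n).1 inE => /predU1P[->|/IH->].
    by rewrite eqxx.
  by rewrite orbT.
have yi : injective y.
  move=> i j yij; apply/eqP; rewrite eqn_leq.
  apply/andP; split; rewrite leqNgt; apply/negP.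
    by move=> /y_in; rewrite -yij; apply/negP; case: (yE i).
  by move=> /y_in; rewrite yij; apply/negP; case: (yE j).
have [tt Htt] := choice (fun n => (chE n).1).
apply: (no_covered_injective_seq y tt yi) => n k kn.
by have /allP := Htt n; apply; apply: y_in.
Qed.

Lemma wf_extends_family : well_founded extends_family.
Proof.
elim=> [|F L IH]; first exact: Acc_extends_family_nil.
exact: Acc_extends_family_cons (wf_extends F) IH.
Qed.

Context {R : realType}.

Definition massB (f : nat -> R) (t : T) : R := \sum_(i < bnd t | ~~ pi i t) f i.

Lemma massB_trunc (f : nat -> R) {t n} : (bnd t <= n)%N ->
  \sum_(i < n | ~~ pi i t) f i = massB f t.
Proof.
move=> bn; rewrite /massB (big_ord_widen_cond _ (fun i => ~~ pi i t) f bn).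
apply: eq_bigl => i.
by case: ltnP => [|/pi_ge_bnd->]; rewrite ?andbT ?andbF.
Qed.

Lemma massB_le_sum (f : nat -> R) {t n} : (forall i, 0 <= f i) -> (bnd t <= n)%N ->
  massB f t <= \sum_(i < n) f i.
Proof.
move=> f0 bn; rewrite -(massB_trunc f bn).
by rewrite [X in _ <= X](bigID (fun i : 'I_n => ~~ pi i t)) lerDl sumr_ge0.
Qed.

Lemma massB_pos_witness (f : nat -> R) t :
  0 < massB f t -> exists2 i, ~~ pi i t & f i != 0.
Proof.
move=> pos; apply: contrapT => nw; move: pos; rewrite /massB big1 ?ltxx // => i pit.
by apply: contra_notP nw => /eqP fi; exists i.
Qed.

Definition dist_on (a n : nat) (f : nat -> R) : Prop :=
  [/\ forall i, 0 <= f i, forall i, ~~ (a <= i < n)%N -> f i = 0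
    & \sum_(i < n) f i = 1].

Lemma dist_on_pure a : dist_on a a.+1 (pure a).
Proof.
split=> [i|i|]; first exact: pure_ge0.
  by rewrite /pure; case: eqP => // ->; rewrite leqnn ltnSn.
rewrite big_ord_recr /= /pure eqxx big1 ?add0r // => i _.
by rewrite ltn_eqF.
Qed.

Lemma dist_on_widen {a a' n n'} {f : nat -> R} : (a' <= a)%N -> (n <= n')%N ->
  dist_on a n f -> dist_on a' n' f.
Proof.
move=> a'a nn' [f0 fout f1]; split=> // [i ai|].
  apply: fout; apply: contra ai => /andP[ai ni].
  by rewrite (leq_trans a'a ai) (leq_trans ni nn').
rewrite -f1 (big_ord_widen _ _ nn') [LHS](bigID (fun i : 'I_n' => (i < n)%N)) /=.
rewrite [X in _ + X]big1 ?addr0 // => i; rewrite -leqNgt => ni.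
by apply: fout; rewrite negb_and ltnNge ni orbT.
Qed.

Lemma dist_on_avg {a n N} (g : nat -> nat -> R) : (0 < N)%N ->
  (forall i, (i < N)%N -> dist_on a n (g i)) ->
  dist_on a n (fun k => N%:R^-1 * \sum_(i < N) g i k).
Proof.
move=> N0 gd; split=> [k|k kout|].
- by rewrite mulr_ge0 ?invr_ge0 // sumr_ge0 // => i _; case: (gd i (ltn_ord i)).
- by rewrite big1 ?mulr0 // => i _; case: (gd i (ltn_ord i)) => _ -> .
rewrite -mulr_sumr exchange_big /= (eq_bigr (fun=> 1)) => [|i _]; last first.
  by case: (gd i (ltn_ord i)).
by rewrite sumr_const card_ord mulVf // pnatr_eq0 -lt0n.
Qed.

Lemma Delta_dist_on {a n f} : dist_on a n f -> Delta R nat f.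
Proof.
move=> [f0 fout f1]; split=> //; rewrite (esum_nat_trunc _ n) ?f1 // => i ni.
by apply: fout; rewrite negb_and -leqNgt ni orbT.
Qed.

Lemma massB_dist_on_le1 a n (f : nat -> R) t : dist_on a n f -> massB f t <= 1.
Proof.
move=> fd; have [f0 _ f1] := dist_on_widen (leqnn a) (leq_maxl n (bnd t)) fd.
by rewrite -f1 massB_le_sum ?leq_maxr.
Qed.

Lemma massB_avg {N} (g : nat -> nat -> R) c t :
  massB (fun k => c * \sum_(i < N) g i k) t = c * \sum_(i < N) massB (g i) t.
Proof. by rewrite /massB -mulr_sumr exchange_big. Qed.

Definition dilutable (L : seq (seq nat)) : Prop :=
  forall a (eps : R), 0 < eps -> exists n f,
    dist_on a n f /\ forall F t, F \in L -> covers F t -> massB f t <= eps.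

Definition one_point_exts (L : seq (seq nat)) (a m : nat) : seq (seq nat) :=
  [seq G <- [seq x :: F | F <- L, x <- iota a (m - a)] | `[< realizable G >]].

Lemma mem_one_point_exts {L a m F x t} : F \in L -> (a <= x < m)%N ->
  covers (x :: F) t -> x :: F \in one_point_exts L a m.
Proof.
move=> FL /andP[ax xm] cov; rewrite mem_filter; apply/andP; split.
  by apply/asboolP; exists t.
apply: (allpairs_f (fun F x => x :: F) FL).
by rewrite mem_iota ax subnKC ?xm // (leq_trans ax (ltnW xm)).
Qed.

Lemma one_point_exts_extends_family (L : seq (seq nat)) (a m : nat) :
  (exists F, F \in L) ->
  (forall F i, F \in L -> i \in F -> (i < a)%N) ->
  extends_family (one_point_exts L a m) L.
Proof.
move=> Lne La; split=> // G; rewrite mem_filter => /andP[/asboolP rG].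
move=> /allpairsP[[F x] [/= FL]]; rewrite mem_iota => /andP[ax _] eG.
rewrite eG in rG *; exists F => //; split=> //; exists x => //.
by apply/negP => /(La _ _ FL); rewrite ltnNge ax.
Qed.

Lemma dilutable_nil : dilutable [::].
Proof.
move=> a eps _; exists a.+1, (pure a); split=> [|F t]; first exact: dist_on_pure.
by rewrite in_nil.
Qed.

Lemma dilutable_step L : (exists F, F \in L) ->
  (forall L', extends_family L' L -> dilutable L') -> dilutable L.
Proof.
move=> Lne IH a eps eps0.
pose a' := maxn a (\max_(F <- L) \max_(i <- F) i).+1.
have La' F i : F \in L -> i \in F -> (i < a')%N.
  move=> FL iF; rewrite leq_max ltnS; apply/orP; right.
  exact: leq_trans (leq_bigmax_seq i iF isT) (leq_bigmax_seq F FL isT).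
have e2 : 0 < eps / 2 by rewrite divr_gt0.
have [NF HNF] := choice (fun m =>
  IH _ (one_point_exts_extends_family L a' m Lne La') a' _ e2).
have [FF HFF] := choice HNF.
pose m i := iter i (fun m => maxn m (NF m)) a'.
have m_le : {homo m : i j / (i <= j)%N}.
  by apply: homo_leq => [x|x y z|i]; [exact: leqnn|exact: leq_trans|exact: leq_maxl].
have NF_le i j : (i < j)%N -> (NF (m i) <= m j)%N.
  by move=> ij; apply: leq_trans (m_le _ _ ij); apply: leq_maxr.
have [N N0 N_large] := exists_inv_nat_le _ e2.
exists (m N), (fun k => N%:R^-1 * \sum_(i < N) FF (m i) k); split.
  apply: (dist_on_avg (fun i => FF (m i))) => // i iN.
  exact: dist_on_widen (leq_maxl _ _) (NF_le _ _ iN) (HFF (m i)).1.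
move=> F t FL cov; rewrite (massB_avg (fun i => FF (m i))).
have mu1 i : massB (FF (m i)) t <= 1 by apply: massB_dist_on_le1 (HFF (m i)).1.
(* A point k of B_t charged by block i makes k :: F one of the sets that every
   later block was built to be small on. *)
have once i j : (i < j)%N -> eps / 2 < massB (FF (m i)) t ->
    massB (FF (m j)) t <= eps / 2.
  move=> ij /(lt_trans e2)/massB_pos_witness[k pk fk].
  have [_ fout _] := (HFF (m i)).1.
  have /andP[a'k kNF] : (a' <= k < NF (m i))%N by apply: contraNT fk => /fout ->.
  have covk : covers (k :: F) t by rewrite /covers /= pk.
  have kmj : (a' <= k < m j)%N by rewrite a'k (leq_trans kNF (NF_le _ _ ij)).
  exact: (HFF (m j)).2 _ _ (mem_one_point_exts FL kmj covk) covk.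
apply: le_trans (_ : N%:R^-1 * (1 + N%:R * (eps / 2)) <= _).
  by rewrite ler_wpM2l ?invr_ge0 //; apply: sum_le_one_large _ _ _ (ltW e2) mu1 once.
by rewrite mulrDr mulr1 mulKf ?pnatr_eq0 -?lt0n // [X in _ <= X](splitr eps) lerD.
Qed.

Lemma dilutable_all L : dilutable L.
Proof.
elim: (wf_extends_family L) => {}L _ IH.
have [Lne|Lnil] := pselect (exists F, F \in L); first exact: dilutable_step.
case: L Lnil {IH} => [_|F L []]; first exact: dilutable_nil.
by exists F; rewrite mem_head.
Qed.


Lemma sum_lt_le_massB (f : nat -> R) t K : (forall i, 0 <= f i) ->
  \sum_(i < K | ~~ pi i t) f i <= massB f t.
Proof.
move=> f0; rewrite -(massB_trunc f (leq_maxr K (bnd t))).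
rewrite (big_ord_widen_cond _ (fun i => ~~ pi i t) f (leq_maxl K (bnd t))).
apply: (ler_sum_pred (fun i => ~~ pi i t && (i < K)%N) (fun i => ~~ pi i t)) => //.
by move=> i _ /andP[].
Qed.

Lemma massB_le_head_tail (f : nat -> R) t K : (forall i, 0 <= f i) ->
  (forall n, \sum_(i < n) f i <= 1) ->
  massB f t <= \sum_(i < K | ~~ pi i t) f i + (1 - \sum_(i < K) f i).
Proof.
move=> f0 f1; pose B := maxn K (bnd t).
rewrite -(massB_trunc f (leq_maxr K (bnd t))) -/B.
rewrite (bigID (fun i : 'I_B => (i < K)%N)) /= lerD //.
  by rewrite (big_ord_widen_cond _ (fun i => ~~ pi i t) f (leq_maxl K (bnd t))).
rewrite lerBrDl (le_trans _ (f1 B)) // (big_ord_widen _ f (leq_maxl K (bnd t))).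
rewrite [X in _ <= X](bigID (fun i : 'I_B => (i < K)%N)) /= lerD //.
apply: (ler_sum_pred (fun i => ~~ pi i t && ~~ (i < K)%N) (fun i => ~~ (i < K)%N)) => //.
by move=> i _ /andP[].
Qed.

Section Argmax.
Variable f : nat -> R.
Hypotheses (f_ge0 : forall i, 0 <= f i) (f_le1 : forall n, \sum_(i < n) f i <= 1).
Hypothesis f_tail : forall d, 0 < d -> exists K, 1 - d <= \sum_(i < K) f i.

Let c := sup (range (massB f)).

Definition heavy (F : seq nat) : Prop :=
  forall d, 0 < d -> exists2 t, covers F t & c - d < massB f t.

Lemma has_sup_massB (t0 : T) : has_sup (range (massB f)).
Proof.
split; first by exists (massB f t0), t0.
exists 1 => _ [t _ <-]; exact: le_trans (massB_le_sum f f_ge0 (leqnn _)) (f_le1 _).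
Qed.

Lemma heavy_nil (t0 : T) : heavy [::].
Proof.
by move=> d d0; have [_ [t _ <-] dt] := sup_adherent d0 (has_sup_massB t0); exists t.
Qed.

Lemma heavy_realizable G : heavy G -> realizable G.
Proof. by move=> hG; have [t covt _] := hG 1 ltr01; exists t. Qed.

Lemma not_heavy_bound G : ~ heavy G ->
  exists2 d, 0 < d & forall t, covers G t -> massB f t <= c - d.
Proof.
move=> nh; apply: contrapT => nd; apply: nh => d dpos; apply: contrapT => nt.
apply: nd; exists d => // t covt; rewrite leNgt; apply/negP => lt.
by apply: nt; exists t.
Qed.

Lemma heavy_extends F : (forall t, exists t', massB f t < massB f t') ->
  heavy F -> exists G, extends G F /\ heavy G.
Proof.
move=> nomax hF; apply: contrapT => noG.
have [t1 covF1 _] := hF 1 ltr01.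
have lt_c t : massB f t < c.
  have [t' tt'] := nomax t; apply: lt_le_trans tt' _.
  by apply: sup_upper_bound; [exact: has_sup_massB t1|exists t'].
pose m := c - massB f t1; have m2 : 0 < m / 2 by rewrite divr_gt0 ?subr_gt0.
have [K HK] := f_tail _ m2.
have [d0 d0_pos d0_cap] : exists2 d0, 0 < d0 & forall x, (x < K)%N -> x \notin F ->
    forall t, covers (x :: F) t -> massB f t <= c - d0.
  apply: finite_pos_lower_bound => [x d d' Pd d'd xF t /(Pd xF)|x _].
    by move/le_trans; apply; rewrite lerD2l lerN2.
  have [xF|xF] := boolP (x \in F); first by exists 1 => //; rewrite xF.
  have /not_heavy_bound[d dpos dx] : ~ heavy (x :: F).
    move=> hx; apply: noG; exists (x :: F); split=> //.
    by split; [exact: heavy_realizable|exists x].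
  by exists d => // _.
have mpos : 0 < Num.min d0 (m / 2) by rewrite lt_min d0_pos m2.
have [t covt tbig] := hF _ mpos.
(* B_t is too heavy to lie inside F and the tail beyond K. *)
have [x [xK xt xF]] : exists x, [/\ (x < K)%N, ~~ pi x t & x \notin F].
  apply: contrapT => nx; move: tbig; apply/negP; rewrite -leNgt.
  apply: le_trans (massB_le_head_tail f t K f_ge0 f_le1) _.
  have low : \sum_(i < K | ~~ pi i t) f i <= massB f t1.
    apply: le_trans (sum_lt_le_massB f t1 K f_ge0).
    apply: (ler_sum_pred (fun i => ~~ pi i t) (fun i => ~~ pi i t1)) => // i iK it.
    have /allP := covF1; apply; apply/negPn/negP => iF; apply: nx; exists i.
    by split.
  have hmin : Num.min d0 (m / 2) <= m / 2 by rewrite ge_min lexx orbT.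
  by move: low HK hmin; rewrite /m; lra.
have := d0_cap x xK xF t; rewrite /covers /= xt => /(_ covt).
rewrite leNgt => /negP; apply; apply: le_lt_trans tbig.
by rewrite lerD2l lerN2 ge_min lexx.
Qed.

Lemma massB_argmax (t0 : T) : exists ts, forall t, massB f t <= massB f ts.
Proof.
apply: contrapT => nomax.
have {}nomax t : exists t', massB f t < massB f t'.
  apply: contrapT => nt; apply: nomax; exists t => t'.
  by rewrite leNgt; apply/negP => lt; apply: nt; exists t'.
suff noheavy F : heavy F -> False by exact: noheavy _ (heavy_nil t0).
elim: (wf_extends F) => {}F _ IH /(heavy_extends _ nomax)[G [GF hG]].
exact: IH GF hG.
Qed.

End Argmax.

Local Open Scope ereal_scope.

Lemma winprob_massB p t : Delta R nat p -> winprob pi p t = (1 - massB p t)%:E.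
Proof.
move=> [p0 p1].
have massBE : \esum_(i in [set: nat]) (p i * (~~ pi i t)%:R)%:E = (massB p t)%:E.
  rewrite (esum_nat_trunc _ (bnd t)) => [|i|i /pi_ge_bnd->]; last by rewrite mulr0.
    congr EFin; rewrite /massB [RHS]big_mkcond; apply: eq_bigr => i _.
    by case: ifP; rewrite ?mulr1 ?mulr0.
  by rewrite mulr_ge0 //; case: (~~ _).
have : winprob pi p t + (massB p t)%:E = 1.
  rewrite -p1 /winprob -massBE -esumD => [|i _|i _]; last 2 first.
  - by rewrite lee_fin mulr_ge0 //; case: (pi i t).
  - by rewrite lee_fin mulr_ge0 //; case: (~~ _).
  apply: eq_esum => i _; rewrite -EFinD -mulrDr.
  by case: (pi i t); rewrite ?addr0 ?add0r ?mulr1.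
by move/(congr1 (fun x => x - (massB p t)%:E)); rewrite addeK // EFinB => ->.
Qed.

Lemma sup_pimix_nat q : Delta R T q ->
  ereal_sup [set pimix pi p q | p in Delta R nat] = 1.
Proof.
move=> Dq; apply/eqP; rewrite eq_le; apply/andP; split.
  by apply: ge_ereal_sup => _ [p Dp <-]; apply: pimix_le1.
apply/lee_subgt0Pr => d d0; rewrite -EFinB.
have [q0 q1] := Dq; have : (1 - d)%:E < \esum_(t in [set: T]) (q t)%:E.
  by rewrite q1 lte_fin gtrBl.
move=> /ereal_sup_gt[_ [A [fA _] <-]] dA.
pose i := \max_(t <- finmap.enum_fset (fset_set A)) bnd t.
have piA t : A t -> pi i t.
  move=> At; apply: pi_ge_bnd; apply: (leq_bigmax_seq t) => //.
  by rewrite in_fset_set // inE.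
apply: le_trans (ereal_sup_ubound _); last by exists (pure i); [exact: Delta_pure|].
rewrite (le_trans (ltW dA)) // pimixE //.
apply: esum_ge; exists A => //; apply: lee_fsum => // t At.
by rewrite winprob_pure piA // mule1.
Qed.

Lemma inf_pimix_attained_nat p (t0 : T) : Delta R nat p ->
  exists2 q0, Delta R T q0 & forall q, Delta R T q -> pimix pi p q0 <= pimix pi p q.
Proof.
move=> Dp; have [p0 _] := Dp.
have p_le1 n : (\sum_(i < n) p i <= 1)%R by apply: Delta_nat_partial_le1.
have [ts tsmax] := massB_argmax p p0 p_le1 (fun d => Delta_nat_partial_ge p d Dp) t0.
exists (pure ts) => [|q Dq]; first exact: Delta_pure.
rewrite pimix_pure_r // winprob_massB //; apply: pimix_ge_winprob => //.
  by rewrite subr_ge0 (le_trans (massB_le_sum p p0 (leqnn _))).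
by move=> t; rewrite winprob_massB // lee_fin lerB.
Qed.

Lemma sup_inf_pimix_nat (t0 : T) :
  ereal_sup [set ereal_inf [set pimix pi p q | q in Delta R T] | p in Delta R nat] = 1.
Proof.
apply/eqP; rewrite eq_le; apply/andP; split.
  apply: ge_ereal_sup => _ [p Dp <-]; apply: ge_ereal_inf.
  exists (pimix pi p (pure t0)); last by apply: pimix_le1 => //; apply: Delta_pure.
  by exists (pure t0); first exact: Delta_pure.
apply/lee_subgt0Pr => d d0; rewrite -EFinB.
pose eps := Num.min d 1%R; have eps0 : (0 < eps)%R by rewrite lt_min d0 ltr01.
have [n [f [fd fsmall]]] := dilutable_all [:: [::]] 0%N eps eps0.
have Df := Delta_dist_on fd.
apply: le_trans (ereal_sup_ubound _); last by exists f.
apply: (@le_trans _ _ (1 - eps)%:E); first by rewrite lee_fin lerB // ge_min lexx.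
apply/ereal_infP => _ [q Dq <-]; apply: pimix_ge_winprob => //; last 2 first.
- by case: Df.
- by move=> t; rewrite winprob_massB // lee_fin lerB // (fsmall [::]) ?mem_head.
by rewrite subr_ge0 ge_min lexx orbT.
Qed.

End NatGame.

Theorem corollary2p12 (R : realType) (S T : choiceType) (pi : S -> T -> bool) :
  countably_infinite S -> countably_infinite T ->
  (forall t : T, finite_set (Bset pi t)) ->
  LNG_free pi ->
  (* for each p, the infimum over q is attained *)
  (forall p, Delta R S p ->
     exists2 q0, Delta R T q0 &
       forall q, Delta R T q -> (pimix pi p q0 <= pimix pi p q)%E) /\
  (* sup_p min_q pimix = 1 *)
  ereal_sup [set ereal_inf [set pimix pi p q | q in Delta R T] | p in Delta R S]
    = 1%E /\
  (* the infimum over q of sup_p is attained *)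
  (exists2 q0, Delta R T q0 &
     forall q, Delta R T q ->
       (ereal_sup [set pimix pi p q0 | p in Delta R S]
        <= ereal_sup [set pimix pi p q | p in Delta R S])%E) /\
  (* min_q sup_p pimix = 1 *)
  ereal_inf [set ereal_sup [set pimix pi p q | p in Delta R S] | q in Delta R T]
    = 1%E.
Proof.
move=> cS cT Bfin LNG.
have [e eb] : exists e : nat -> S, bijective e.
  have /card_set_bijP[g] := cS; rewrite setTT_bijective => -[e ge eg].
  by exists e; exists g.
have [t0 _] : exists t0 : T, True.
  have /card_set_bijP[h] := cT; rewrite setTT_bijective => -[h' _ _].
  by exists (h' 0%N).
have Bfin' t := finite_Bset_comp pi e t (bij_inj eb) (Bfin t).
have LNG' := LNG_free_comp pi e (bij_inj eb) LNG.
have sup1 q : Delta R T q -> ereal_sup [set pimix pi p q | p in Delta R S] = 1%E.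
  by move=> Dq; rewrite (image_Delta_pimix pi (fun h => h q) eb) sup_pimix_nat.
split.
  move=> p /(Delta_comp eb)/(inf_pimix_attained_nat Bfin' LNG' _ t0)[q0 Dq0 q0min].
  exists q0 => // q Dq.
  by rewrite (pimix_comp pi e p q0 eb) (pimix_comp pi e p q eb) q0min.
split.
  rewrite (image_Delta_pimix pi (fun h => ereal_inf [set h q | q in Delta R T]) eb).
  exact: (sup_inf_pimix_nat Bfin' LNG' t0).
split; first by exists (pure t0) => [|q Dq]; rewrite ?sup1 //; apply: Delta_pure.
rewrite (_ : [set _ | q in Delta R T] = [set 1%E]) ?ereal_inf1 //.
apply/seteqP; split=> [_ [q Dq <-]|_ ->]; first by rewrite /= sup1.
by exists (pure t0); [exact: Delta_pure|apply: sup1; exact: Delta_pure].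
Qed.
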